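(* Let $(\mathscr{C}_1,T_1)$ and $(\mathscr{C}_2,T_2)$ be sites, and let $\mathscr{F}:\mathscr{C}_1\to\mathscr{C}_2$ be a functor that is continuous, cocontinuous, has dense image (with respect to $T_2$), preserves coproducts and inverts coproducts. Suppose $\mathscr{C}_2$ is extensive. Then the functors \[ \mathscr{F}^{*}:\mathrm{Sh}(\mathscr{C}_2,T_2)\rightleftarrows \mathrm{Sh}(\mathscr{C}_1,T_1):\mathscr{F}_{*} \] (restrictions of precomposition $\mathscr{F}^*\mathcal{G}=\mathcal{G}\circ\mathscr{F}$ and of right Kan extension $\mathscr{F}_*$) establish an adjoint equivalence of categories.
   Context: All categories are locally small. A Grothendieck topology $T$ on a category $\mathscr{C}$ assigns to each object $X$ a set $T_X$ of families $(\pi_i:U_i\to X)_{i\in I}$ (''coverings'') such that: (1) for every isomorphism $\phi:U\to X$, $(\phi)\in T_X$; (2) if $(\pi_i:U_i\to X)_{i\in I}\in T_X$ and $(\psi_j)_{j\in J_i}\in T_{U_i}$ for each $i$, then $(\pi_i\circ\psi_j)_{i\in I,j\in J_i}\in T_X$; (3) if $(\pi_i:U_i\to X)\in T_X$ and $f:W\to X$ is any morphism, all pullbacks $f^*\pi_i:f^*U_i\to W$ exist and $(f^*\pi_i)_i\in T_W$. A site is a category with a Grothendieck topology. A morphism is universal if its pullback along every morphism exists. A morphism $\pi:Y\to X$ is $T$-locally split if there is a covering $(\pi_i:U_i\to X)_{i\in I}$ and morphisms $\rho_i:U_i\to Y$ with $\pi\circ\rho_i=\pi_i$. A functor $\mathscr{F}:(\mathscr{C}_1,T_1)\to(\mathscr{C}_2,T_2)$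 is continuous if it sends universal $T_1$-locally split morphisms to universal $T_2$-locally split morphisms and preserves fibre products with universal $T_1$-locally split morphisms. It is cocontinuous if for every object $X$ of $\mathscr{C}_1$ and every universal $T_2$-locally split $\pi:Y\to\mathscr{F}(X)$ there exist a universal $T_1$-locally split $\pi':Y'\to X$ and a morphism $r:\mathscr{F}(Y')\to Y$ with $\pi\circ r=\mathscr{F}(\pi')$. It has dense image (w.r.t. $T_2$) if it is fully faithful and for each object $X$ of $\mathscr{C}_2$ there are objects $U_i$ of $\mathscr{C}_1$ ($i\in I$) and morphisms $\phi_i:\mathscr{F}(U_i)\to X$ such that $\coprod_i\mathscr{F}(U_i)$ exists and the induced morphism $\coprod_i\mathscr{F}(U_i)\to X$ is universal and $T_2$-locally split. It inverts coproducts if it is fully faithful and whenever $\mathscr{F}(X)=\coprod_{i\in I}Z_i$ for an object $X$ of $\mathscr{C}_1$, there exist objects $X_i$ of $\mathscr{C}_1$ and isomorphisms $\mathscr{F}(X_i)\to Z_i$. A category is extensive if it has an initial object $\emptyset$, binary coproducts that exist are disjoint (the square with $\emptyset\to X$, $\emptyset\to Y$, $X\to X\sqcup Y$, $Y\to X\sqcup Y$ is a pullback), and coproducts are stable under pullback: for any existing coproduct $\coprod_i U_i$ and any $f:X\to\coprod_iU_i$, the pullbacks $X\times_{\coprod U_i}U_i$ exist and $X$ is their coproduct via the projections (existence of all coproducts is not required). A presheaf is a functor $\mathscr{C}^{op}\to\mathrm{Set}$; it is extensive if for every existing coproduct $X=\coprod_iX_i$ the canonical map $\mathcal{F}(X)\to\prod_i\mathcal{F}(X_i)$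 is a bijection. It satisfies descent w.r.t. $\pi:Y\to X$ (with $Y\times_XY$ existing) if $\mathcal{F}(X)\to\mathcal{F}(Y)\rightrightarrows\mathcal{F}(Y\times_XY)$ is an equalizer. A $T$-sheaf is an extensive presheaf satisfying descent w.r.t. all universal $T$-locally split morphisms; $\mathrm{Sh}(\mathscr{C},T)$ is the full subcategory of presheaves on these. For $\mathscr{F}:\mathscr{C}_1\to\mathscr{C}_2$, $\mathscr{F}_*$ is the right Kan extension: $(\mathscr{F}_*\mathcal{F})(Y)=\lim \mathscr{P}_Y^*\mathcal{F}$ over the category $\mathscr{F}/Y$ of pairs $(X,\psi:\mathscr{F}(X)\to Y)$, i.e. families $(s_{X,\psi}\in\mathcal{F}(X))$ compatible under morphisms of $\mathscr{F}/Y$; it is right adjoint to $\mathscr{F}^*$ on presheaves. *)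

Set Implicit Arguments.
Unset Strict Implicit.

(** * Categories (locally small: hom-types, Leibniz equality of morphisms) *)
Record Category := {
  Ob :> Type;
  Hom : Ob -> Ob -> Type;
  cid : forall X, Hom X X;
  comp : forall X Y Z, Hom Y Z -> Hom X Y -> Hom X Z;   (* comp g f = g o f *)
  comp_id_l : forall X Y (f : Hom X Y), comp (cid Y) f = f;
  comp_id_r : forall X Y (f : Hom X Y), comp f (cid X) = f;
  comp_assoc : forall X Y Z W (h : Hom Z W) (g : Hom Y Z) (f : Hom X Y),
      comp h (comp g f) = comp (comp h g) f
}.
Arguments cid {C} X : rename.
Arguments comp {C X Y Z} g f : rename.
Arguments Hom {C} X Y : rename.

Record Functor (C D : Category) := {
  fobj :> Ob C -> Ob D;
  fmap : forall X Y, Hom X Y -> Hom (fobj X) (fobj Y);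
  fmap_id : forall X, fmap (cid X) = cid (fobj X);
  fmap_comp : forall X Y Z (g : Hom Y Z) (f : Hom X Y),
      fmap (comp g f) = comp (fmap g) (fmap f)
}.
Arguments fmap {C D} F {X Y} f : rename.


Definition IsIso {C : Category} (X Y : C) (f : Hom X Y) : Prop :=
  exists g : Hom Y X, comp g f = cid X /\ comp f g = cid Y.

(** [P --p2--> Y ; P --p1--> W] is a pullback of [pi : Y -> X] along [f : W -> X]. *)
Definition IsPullback {C : Category} (W Y X : C) (f : Hom W X) (pi : Hom Y X)
    (P : C) (p1 : Hom P W) (p2 : Hom P Y) : Prop :=
  comp f p1 = comp pi p2 /\
  forall (Q : C) (q1 : Hom Q W) (q2 : Hom Q Y), comp f q1 = comp pi q2 ->
    exists u : Hom Q P, (comp p1 u = q1 /\ comp p2 u = q2) /\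
      forall u' : Hom Q P, comp p1 u' = q1 -> comp p2 u' = q2 -> u' = u.

Definition PullbackExists {C : Category} (W Y X : C) (f : Hom W X) (pi : Hom Y X) : Prop :=
  exists (P : C) (p1 : Hom P W) (p2 : Hom P Y), IsPullback f pi p1 p2.

Definition Universal {C : Category} (Y X : C) (pi : Hom Y X) : Prop :=
  forall (W : C) (f : Hom W X), PullbackExists f pi.

Definition IsCoproduct {C : Category} (I : Type) (Z : I -> C) (S : C)
    (iota : forall i, Hom (Z i) S) : Prop :=
  forall (Q : C) (q : forall i, Hom (Z i) Q),
    exists u : Hom S Q, (forall i, comp u (iota i) = q i) /\
      forall u' : Hom S Q, (forall i, comp u' (iota i) = q i) -> u' = u.

Arguments IsCoproduct {C I} Z {S} iota.

Definition IsInitial {C : Category} (E : C) : Prop :=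
  forall X : C, exists f : Hom E X, forall g : Hom E X, g = f.

Definition Extensive (C : Category) : Prop :=
  (exists E : C, IsInitial E) /\
  (* existing binary coproducts are disjoint *)
  (forall (E : C) (eX : forall X : C, Hom E X), IsInitial E ->
     forall (Z : bool -> C) (S : C) (iota : forall b, Hom (Z b) S),
       IsCoproduct Z iota ->
       IsPullback (iota true) (iota false) (eX (Z true)) (eX (Z false))) /\
  (* coproducts are stable under pullback *)
  (forall (I : Type) (U : I -> C) (S : C) (iota : forall i, Hom (U i) S),
     IsCoproduct U iota ->
     forall (X : C) (f : Hom X S),
       (forall i, PullbackExists f (iota i)) /\
       (forall (P : I -> C) (p1 : forall i, Hom (P i) X)
               (p2 : forall i, Hom (P i) (U i)),
          (forall i, IsPullback f (iota i) (p1 i) (p2 i)) ->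
          IsCoproduct P p1)).

Record Family {C : Category} (X : C) := {
  fam_I : Type;
  fam_U : fam_I -> C;
  fam_pi : forall i, Hom (fam_U i) X
}.

Arguments fam_I {C X} f.
Arguments fam_U {C X} f i.
Arguments fam_pi {C X} f i.

Definition Topology (C : Category) := forall X : C, Family X -> Prop.

Definition singleton_family {C : Category} (U X : C) (phi : Hom U X) : Family X :=
  {| fam_I := unit; fam_U := fun _ => U; fam_pi := fun _ => phi |}.

Definition compose_family {C : Category} (X : C) (F : Family X)
    (G : forall i, Family (fam_U F i)) : Family X :=
  {| fam_I := { i : fam_I F & fam_I (G i) };
     fam_U := fun ij => fam_U (G (projT1 ij)) (projT2 ij);
     fam_pi := fun ij => comp (fam_pi F (projT1 ij)) (fam_pi (G (projT1 ij)) (projT2 ij)) |}.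

Definition IsGrothendieckTopology {C : Category} (T : Topology C) : Prop :=
  (forall (U X : C) (phi : Hom U X), IsIso phi -> T X (singleton_family phi)) /\
  (forall (X : C) (F : Family X) (G : forall i, Family (fam_U F i)),
     T X F -> (forall i, T (fam_U F i) (G i)) -> T X (compose_family G)) /\
  (forall (X : C) (F : Family X), T X F ->
     forall (W : C) (f : Hom W X),
       (forall i, PullbackExists f (fam_pi F i)) /\
       (forall (P : fam_I F -> C) (p1 : forall i, Hom (P i) W)
               (p2 : forall i, Hom (P i) (fam_U F i)),
          (forall i, IsPullback f (fam_pi F i) (p1 i) (p2 i)) ->
          T W {| fam_I := fam_I F; fam_U := P; fam_pi := p1 |})).

Definition LocallySplit {C : Category} (T : Topology C) (Y X : C) (pi : Hom Y X) : Prop :=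
  exists (F : Family X), T X F /\
    exists rho : forall i, Hom (fam_U F i) Y,
      forall i, comp pi (rho i) = fam_pi F i.

Definition UnivLocSplit {C : Category} (T : Topology C) (Y X : C) (pi : Hom Y X) : Prop :=
  Universal pi /\ LocallySplit T pi.

(** * Presheaves of sets (raw data + functoriality as a predicate) *)
Record PreData (C : Category) := {
  pob :> C -> Type;
  pmap : forall X Y : C, Hom X Y -> pob Y -> pob X
}.

Arguments pmap {C} p {X Y} f s.
Arguments pob {C} p X.

Definition IsPresheaf {C : Category} (P : PreData C) : Prop :=
  (forall (X : C) (s : P X), pmap P (cid X) s = s) /\
  (forall (X Y Z : C) (g : Hom Y Z) (f : Hom X Y) (s : P Z),
      pmap P (comp g f) s = pmap P f (pmap P g s)).

Definition ExtensivePresheaf {C : Category} (P : PreData C) : Prop :=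
  forall (I : Type) (Z : I -> C) (S : C) (iota : forall i, Hom (Z i) S),
    IsCoproduct Z iota ->
    (forall s s' : P S, (forall i, pmap P (iota i) s = pmap P (iota i) s') -> s = s') /\
    (forall t : forall i, P (Z i), exists s : P S, forall i, pmap P (iota i) s = t i).

(** Descent w.r.t. [pi : Y -> X]: for (any choice of) the fibre product
    [Y x_X Y], [P X -> P Y => P (Y x_X Y)] is an equalizer. *)
Definition Descent {C : Category} (P : PreData C) (Y X : C) (pi : Hom Y X) : Prop :=
  forall (K : C) (p1 p2 : Hom K Y), IsPullback pi pi p1 p2 ->
    (forall s s' : P X, pmap P pi s = pmap P pi s' -> s = s') /\
    (forall t : P Y, pmap P p1 t = pmap P p2 t -> exists s : P X, pmap P pi s = t).

Definition IsSheaf {C : Category} (T : Topology C) (P : PreData C) : Prop :=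
  IsPresheaf P /\ ExtensivePresheaf P /\
  forall (Y X : C) (pi : Hom Y X), UnivLocSplit T pi -> Descent P pi.



Section FunctorProps.
Variables (C1 C2 : Category) (F : Functor C1 C2).

Definition FullyFaithful : Prop :=
  forall X Y : C1,
    (forall f g : Hom X Y, fmap F f = fmap F g -> f = g) /\
    (forall h : Hom (F X) (F Y), exists f : Hom X Y, fmap F f = h).

Definition Continuous (T1 : Topology C1) (T2 : Topology C2) : Prop :=
  (forall (Y X : C1) (pi : Hom Y X), UnivLocSplit T1 pi -> UnivLocSplit T2 (fmap F pi)) /\
  (forall (W Y X : C1) (f : Hom W X) (pi : Hom Y X), UnivLocSplit T1 pi ->
     forall (P : C1) (p1 : Hom P W) (p2 : Hom P Y), IsPullback f pi p1 p2 ->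
       IsPullback (fmap F f) (fmap F pi) (fmap F p1) (fmap F p2)).

Definition Cocontinuous (T1 : Topology C1) (T2 : Topology C2) : Prop :=
  forall (X : C1) (Y : C2) (pi : Hom Y (F X)), UnivLocSplit T2 pi ->
    exists (Y' : C1) (pi' : Hom Y' X), UnivLocSplit T1 pi' /\
      exists r : Hom (F Y') Y, comp pi r = fmap F pi'.

Definition DenseImage (T2 : Topology C2) : Prop :=
  FullyFaithful /\
  forall X : C2, exists (I : Type) (U : I -> C1) (phi : forall i, Hom (F (U i)) X)
    (S : C2) (iota : forall i, Hom (F (U i)) S),
    IsCoproduct (fun i => F (U i)) iota /\
    exists h : Hom S X, (forall i, comp h (iota i) = phi i) /\ UnivLocSplit T2 h.

Definition PreservesCoproducts : Prop :=
  forall (I : Type) (Z : I -> C1) (S : C1) (iota : forall i, Hom (Z i) S),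
    IsCoproduct Z iota -> IsCoproduct (fun i => F (Z i)) (fun i => fmap F (iota i)).

Definition InvertsCoproducts : Prop :=
  FullyFaithful /\
  forall (X : C1) (I : Type) (Z : I -> C2) (iota : forall i, Hom (Z i) (F X)),
    IsCoproduct Z iota ->
    exists Xi : I -> C1, forall i, exists u : Hom (F (Xi i)) (Z i), IsIso u.

Definition pullbackPre (G : PreData C2) : PreData C1 :=
  {| pob := fun X => G (F X);
     pmap := fun X Y f s => pmap G (fmap F f) s |}.

(** Compatible families over the comma category F/Y. *)
Definition Compatible (H : PreData C1) (Y : C2)
    (s : forall X : C1, Hom (F X) Y -> H X) : Prop :=
  forall (X X' : C1) (h : Hom X' X) (psi : Hom (F X) Y),
    pmap H h (s X psi) = s X' (comp psi (fmap F h)).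

Definition pushOb (H : PreData C1) (Y : C2) : Type :=
  { s : forall X : C1, Hom (F X) Y -> H X | @Compatible H Y s }.

Lemma pushMap_compat (H : PreData C1) (Y Y' : C2) (g : Hom Y' Y)
    (s : pushOb H Y) :
  @Compatible H Y' (fun X (psi : Hom (F X) Y') => proj1_sig s X (comp g psi)).
Proof.
  intros X X' h psi. rewrite (proj2_sig s). rewrite comp_assoc. reflexivity.
Qed.

Definition pushforwardPre (H : PreData C1) : PreData C2 :=
  {| pob := pushOb H;
     pmap := fun Y' Y g s =>
       exist _ (fun X psi => proj1_sig s X (comp g psi)) (pushMap_compat g s) |}.

(** Unit [G Y -> (F_* F^* G) Y], [s |-> (G psi s)_(X,psi)], is bijective. *)
Definition UnitBijective (G : PreData C2) (Y : C2) : Prop :=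
  forall t : pushforwardPre (pullbackPre G) Y,
    exists s : G Y, (forall X psi, pmap G psi s = proj1_sig t X psi) /\
      forall s' : G Y, (forall X psi, pmap G psi s' = proj1_sig t X psi) -> s' = s.

Definition counit (H : PreData C1) (X : C1) :
    pullbackPre (pushforwardPre H) X -> H X :=
  fun s => proj1_sig s X (cid (F X)).

Definition CounitBijective (H : PreData C1) (X : C1) : Prop :=
  (forall s s', @counit H X s = @counit H X s' -> s = s') /\
  (forall t : H X, exists s, @counit H X s = t).

(** The adjunction F^* -| F_* restricts to an adjoint equivalence
    Sh(C2,T2) <-> Sh(C1,T1): both functors preserve sheaves, and unit and
    counit are isomorphisms on sheaves. *)
Definition ShAdjointEquivalence (T1 : Topology C1) (T2 : Topology C2) : Prop :=
  (forall G : PreData C2, IsSheaf T2 G -> IsSheaf T1 (pullbackPre G)) /\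
  (forall H : PreData C1, IsSheaf T1 H -> IsSheaf T2 (pushforwardPre H)) /\
  (forall G : PreData C2, IsSheaf T2 G -> forall Y : C2, UnitBijective G Y) /\
  (forall H : PreData C1, IsSheaf T1 H -> forall X : C1, CounitBijective H X).

End FunctorProps.

(* As F is fully faithful, (X, id) is terminal in F/F(X), so the counit is bijective; and
   F^* preserves sheaves because F is continuous and preserves coproducts.  The substance is
   that F_* H is a sheaf and that the unit is bijective, and in both cases a compatible
   family over F/Y is glued pointwise.  For extensivity, pulling a coproduct decomposition
   of S back along F(W) -> S gives, as C2 is extensive and F inverts coproducts, a
   decomposition of W in C1 that F preserves, over which H glues; two distinct summands
   can only meet in an object with at most one map to anything, on which a sheaf has at
   most one section.  For descent, cocontinuity refines the pullback of a T2-cover along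
   F(W) -> X to a T1-cover of W.  For the unit, density covers Y by a coproduct of objects
   F(U_i), so a section of G over Y is determined by, and glued from, its values on F/Y. *)

From Stdlib Require Import FunctionalExtensionality ProofIrrelevance ChoiceFacts ClassicalEpsilon.
Set Implicit Arguments.
Unset Strict Implicit.

Lemma dep_functional_choice {A : Type} {B : A -> Type} (R : forall x, B x -> Prop) :
  (forall x, exists y, R x y) -> exists f : forall x, B x, forall x, R x (f x).
Proof. exact (non_dep_dep_functional_choice choice B R). Qed.

Lemma pullback_family {C : Category} {I : Type} (W X : C) (Y : I -> C)
    (f : Hom W X) (pi : forall i, Hom (Y i) X) :
  (forall i, PullbackExists f (pi i)) ->
  exists (P : I -> C) (p1 : forall i, Hom (P i) W) (p2 : forall i, Hom (P i) (Y i)),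
    forall i, IsPullback f (pi i) (p1 i) (p2 i).
Proof.
  intro Hpb.
  destruct (dep_functional_choice (B := fun i => {P : C & (Hom P W * Hom P (Y i))%type})
              (R := fun i x => IsPullback f (pi i) (fst (projT2 x)) (snd (projT2 x)))) as [g Hg].
  { intro i. destruct (Hpb i) as (P & p1 & p2 & HP). exists (existT _ P (p1, p2)). exact HP. }
  exists (fun i => projT1 (g i)), (fun i => fst (projT2 (g i))), (fun i => snd (projT2 (g i))).
  exact Hg.
Qed.

Lemma coproduct_comp_iso {C : Category} {I : Type} (Z Z' : I -> C) (S : C)
    (iota : forall i, Hom (Z i) S) (u : forall i, Hom (Z' i) (Z i)) :
  IsCoproduct Z iota -> (forall i, IsIso (u i)) ->
  IsCoproduct Z' (fun i => comp (iota i) (u i)).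
Proof.
  intros Hc Hu.
  destruct (dep_functional_choice (B := fun i => Hom (Z i) (Z' i))
              (R := fun i v => comp v (u i) = cid _ /\ comp (u i) v = cid _) Hu) as [v Hv].
  intros Q q. destruct (Hc Q (fun i => comp (q i) (v i))) as [w [Hw Hw_uniq]].
  exists w. split.
  - intro i. rewrite comp_assoc, Hw, <- comp_assoc, (proj1 (Hv i)), comp_id_r. reflexivity.
  - intros w' Hw'. apply Hw_uniq. intro i. rewrite <- (Hw' i).
    rewrite <- !comp_assoc, (proj2 (Hv i)), comp_id_r. reflexivity.
Qed.

Lemma fully_faithful_reflects_coproduct {C1 C2 : Category} (F : Functor C1 C2) {I : Type}
    (Z : I -> C1) (S : C1) (iota : forall i, Hom (Z i) S) :
  FullyFaithful F ->
  IsCoproduct (fun i => F (Z i)) (fun i => fmap F (iota i)) -> IsCoproduct Z iota.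
Proof.
  intros FF Hc Q q.
  destruct (Hc (F Q) (fun i => fmap F (q i))) as [w [Hw Hw_uniq]].
  destruct (proj2 (FF S Q) w) as [w0 <-].
  exists w0. split.
  - intro i. apply (proj1 (FF _ _)). rewrite fmap_comp. apply Hw.
  - intros w' Hw'. apply (proj1 (FF _ _)). apply Hw_uniq. intro i.
    rewrite <- fmap_comp, Hw'. reflexivity.
Qed.

Lemma pullback_pasting {C : Category} (W X Y V : C) (f : Hom W X) (pi : Hom Y X)
    (P : C) (p1 : Hom P W) (p2 : Hom P Y) (g : Hom V W)
    (Q : C) (q1 : Hom Q V) (q2 : Hom Q Y) :
  IsPullback f pi p1 p2 -> IsPullback (comp f g) pi q1 q2 ->
  exists m : Hom Q P, IsPullback g p1 q1 m /\ comp p2 m = q2.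
Proof.
  intros [HP HP_univ] [HQ HQ_univ].
  destruct (HP_univ Q (comp g q1) q2) as [m [[Hm1 Hm2] _]].
  { rewrite comp_assoc. exact HQ. }
  exists m. split; [split|exact Hm2].
  - symmetry. exact Hm1.
  - intros R r1 r2 Hr.
    destruct (HQ_univ R r1 (comp p2 r2)) as [u [[Hu1 Hu2] Hu_uniq]].
    { rewrite <- comp_assoc, Hr, !comp_assoc, HP. reflexivity. }
    exists u. split; [split|].
    + exact Hu1.
    + destruct (HP_univ R (comp p1 r2) (comp p2 r2)) as [z [_ Hz]].
      { rewrite !comp_assoc, HP. reflexivity. }
      rewrite (Hz r2 eq_refl eq_refl). apply Hz.
      * rewrite comp_assoc, Hm1, <- comp_assoc, Hu1. exact Hr.
      * rewrite comp_assoc, Hm2. exact Hu2.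
    + intros u' H1 H2. apply Hu_uniq; [exact H1|].
      rewrite <- H2, comp_assoc, Hm2. reflexivity.
Qed.

Lemma univ_loc_split_pullback {C : Category} (T : Topology C) (W X Y : C)
    (f : Hom W X) (pi : Hom Y X) (P : C) (p1 : Hom P W) (p2 : Hom P Y) :
  IsGrothendieckTopology T ->
  UnivLocSplit T pi -> IsPullback f pi p1 p2 -> UnivLocSplit T p1.
Proof.
  intros [_ [_ HT_pb]] [Hu [Fm [HF [rho Hrho]]]] Hpb. split.
  - intros V g. destruct (Hu V (comp f g)) as (Q & q1 & q2 & HQ).
    destruct (pullback_pasting Hpb HQ) as [m [Hm _]].
    exists Q, q1, m. exact Hm.
  - destruct (HT_pb X Fm HF W f) as [Hex Hcov].
    destruct (pullback_family Hex) as (Pi & a & b & Hab).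
    exists {| fam_I := fam_I Fm; fam_U := Pi; fam_pi := a |}.
    split; [exact (Hcov Pi a b Hab)|]. simpl.
    apply (dep_functional_choice (R := fun i s => comp p1 s = a i)). intro i.
    destruct (proj2 Hpb (Pi i) (a i) (comp (rho i) (b i))) as [s [[Hs _] _]].
    { rewrite (proj1 (Hab i)), comp_assoc, Hrho. reflexivity. }
    exists s. exact Hs.
Qed.

Lemma univ_loc_split_id {C : Category} (T : Topology C) (X : C) :
  IsGrothendieckTopology T -> UnivLocSplit T (cid X).
Proof.
  intros [HT_iso _]. split.
  - intros W f. exists W, (cid W), f. split.
    + rewrite comp_id_l, comp_id_r. reflexivity.
    + intros Q q1 q2 Hq. rewrite comp_id_l in Hq.
      exists q1. split; [split; [apply comp_id_l | exact Hq]|].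
      intros u' H1 _. rewrite comp_id_l in H1. exact H1.
  - exists (singleton_family (cid X)). split.
    + apply HT_iso. exists (cid X). split; apply comp_id_l.
    + exists (fun _ => cid X). intro i. apply comp_id_l.
Qed.

Lemma sheaf_restr_inj {C : Category} (T : Topology C) (P : PreData C)
    (Y X : C) (pi : Hom Y X) :
  IsSheaf T P -> UnivLocSplit T pi ->
  forall s s' : P X, pmap P pi s = pmap P pi s' -> s = s'.
Proof.
  intros [_ [_ HD]] Hpi. destruct (proj1 Hpi Y pi) as (K & k1 & k2 & HK).
  exact (proj1 (HD _ _ _ Hpi _ _ _ HK)).
Qed.

Definition Cosubterminal {C : Category} (A : C) : Prop :=
  forall (Q : C) (u u' : Hom A Q), u = u'.

Lemma fully_faithful_reflects_cosubterminal {C1 C2 : Category} (F : Functor C1 C2) (V : C1) :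
  FullyFaithful F -> Cosubterminal (F V) -> Cosubterminal V.
Proof. intros FF HV Q u u'. apply (proj1 (FF _ _)). apply HV. Qed.

Lemma extensive_presheaf_cosubterminal {C : Category} (P : PreData C) (V : C) :
  IsPresheaf P -> ExtensivePresheaf P -> Cosubterminal V -> forall a b : P V, a = b.
Proof.
  intros [Hid _] Hext HV a b.
  assert (Hc : IsCoproduct (fun _ : bool => V) (fun _ => cid V)).
  { intros Q q. exists (q true). split.
    - intro i. rewrite comp_id_r. apply HV.
    - intros u' Hu'. rewrite <- (Hu' true), comp_id_r. reflexivity. }
  destruct (proj2 (Hext bool _ V _ Hc) (fun i => if i then a else b)) as [s Hs].
  pose proof (Hs true) as Ha. pose proof (Hs false) as Hb. simpl in Ha, Hb.
  rewrite Hid in Ha, Hb. congruence.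
Qed.

Lemma extensive_pullback_coproduct {C : Category} {I : Type} (Z : I -> C) (S : C)
    (iota : forall i, Hom (Z i) S) (X : C) (f : Hom X S) :
  Extensive C -> IsCoproduct Z iota ->
  exists (P : I -> C) (p1 : forall i, Hom (P i) X) (p2 : forall i, Hom (P i) (Z i)),
    (forall i, IsPullback f (iota i) (p1 i) (p2 i)) /\ IsCoproduct P p1.
Proof.
  intros [_ [_ Hstable]] Hc.
  destruct (Hstable I Z S iota Hc X f) as [Hex Hcop].
  destruct (pullback_family Hex) as (P & p1 & p2 & Hpb).
  exists P, p1, p2. split; [exact Hpb | exact (Hcop P p1 p2 Hpb)].
Qed.

Lemma extensive_summands_disjoint {C : Category} {I : Type} (Z : I -> C) (S : C)
    (iota : forall i, Hom (Z i) S) (j l : I) (A : C) (a : Hom A (Z j)) (b : Hom A (Z l)) :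
  Extensive C -> IsCoproduct Z iota ->
  j <> l -> comp (iota j) a = comp (iota l) b -> Cosubterminal A.
Proof.
  intros HE Hc Hjl Hab Q u u'.
  destruct (extensive_pullback_coproduct (comp (iota j) a) HE Hc)
    as (P & e & c & Hpb & Hcop).
  destruct (proj2 (Hpb j) A (cid A) a) as [sj [[Hsj _] _]]; [apply comp_id_r|].
  destruct (proj2 (Hpb l) A (cid A) b) as [sl [[Hsl _] _]].
  { rewrite comp_id_r. exact Hab. }
  (* [A] lies in both the j-th and the l-th summand of its own decomposition, so [u] and
     [u'] both equal the map that is [u'] on the l-th summand and [u] elsewhere. *)
  destruct (Hcop Q (fun m => if excluded_middle_informative (m = l)
                             then comp u' (e m) else comp u (e m))) as [w [Hw _]].
  assert (Hu : u = w).
  { rewrite <- (comp_id_r u), <- (comp_id_r w), <- Hsj, !comp_assoc, (Hw j).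
    destruct (excluded_middle_informative (j = l)); [contradiction | reflexivity]. }
  assert (Hu' : u' = w).
  { rewrite <- (comp_id_r u'), <- (comp_id_r w), <- Hsl, !comp_assoc, (Hw l).
    destruct (excluded_middle_informative (l = l)); [reflexivity | contradiction]. }
  congruence.
Qed.

Lemma extensive_injection_monic {C : Category} {I : Type} (Z : I -> C) (S : C)
    (iota : forall i, Hom (Z i) S) (j : I) (A : C) (a b : Hom A (Z j)) :
  Extensive C -> IsCoproduct Z iota ->
  comp (iota j) a = comp (iota j) b -> a = b.
Proof.
  intros HE Hc Hab.
  destruct (extensive_pullback_coproduct (iota j) HE Hc) as (P & e & c & Hpb & Hcop).
  destruct (proj2 (Hpb j) (Z j) (cid _) (cid _)) as [d [[Hd_e Hd_c] _]]; [reflexivity|].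
  (* [r] is the second projection on [P j = Z j x_S Z j] and the first one elsewhere; the
     diagonal [d] shows that [r] is the identity, so both projections of [P j] agree. *)
  pose (w := fun m => match excluded_middle_informative (j = m) with
                      | left E => eq_rect j (fun y => Hom (P y) (Z j)) (c j) m E
                      | right _ => e m
                      end).
  destruct (Hcop (Z j) w) as [r [Hr _]].
  assert (Hr_j : comp r (e j) = c j).
  { rewrite (Hr j). unfold w.
    destruct (excluded_middle_informative (j = j)) as [E|]; [|contradiction].
    rewrite (proof_irrelevance _ E eq_refl). reflexivity. }
  assert (Hr_id : r = cid _).
  { transitivity (comp r (comp (e j) d)); [rewrite Hd_e, comp_id_r; reflexivity|].
    rewrite comp_assoc, Hr_j. exact Hd_c. }
  destruct (proj2 (Hpb j) A a b Hab) as [m [[Hm_e Hm_c] _]].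
  rewrite <- Hm_e, <- Hm_c, <- Hr_j, Hr_id, comp_id_l. reflexivity.
Qed.

Section ImageCoproducts.
Variables (C1 C2 : Category) (F : Functor C1 C2).
Hypothesis Hinv : InvertsCoproducts F.
Hypothesis HE : Extensive C2.

Lemma image_coproduct_decomposition {I : Type} (Z : I -> C2) (S : C2)
    (iota : forall i, Hom (Z i) S) (W : C1) (psi : Hom (F W) S) :
  IsCoproduct Z iota ->
  exists (Wi : I -> C1) (j : forall i, Hom (Wi i) W) (phi : forall i, Hom (F (Wi i)) (Z i)),
    IsCoproduct Wi j /\ IsCoproduct (fun i => F (Wi i)) (fun i => fmap F (j i)) /\
    forall i, comp psi (fmap F (j i)) = comp (iota i) (phi i).
Proof.
  intro Hc. destruct Hinv as [FF Hinv_ex].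
  destruct (extensive_pullback_coproduct psi HE Hc) as (P & p1 & p2 & Hpb & Hcop).
  destruct (Hinv_ex W I P p1 Hcop) as [Wi HWi].
  destruct (dep_functional_choice HWi) as [u Hu].
  destruct (dep_functional_choice (B := fun i => Hom (Wi i) W)
              (R := fun i j => fmap F j = comp (p1 i) (u i))
              (fun i => proj2 (FF _ _) _)) as [j Hj].
  assert (HcF : IsCoproduct (fun i => F (Wi i)) (fun i => fmap F (j i))).
  { replace (fun i => fmap F (j i)) with (fun i => comp (p1 i) (u i))
      by (apply functional_extensionality_dep; intro i; symmetry; apply Hj).
    exact (coproduct_comp_iso Hcop Hu). }
  exists Wi, j, (fun i => comp (p2 i) (u i)).
  split; [exact (fully_faithful_reflects_coproduct FF HcF)|split; [exact HcF|]].
  intro i. rewrite Hj, !comp_assoc, (proj1 (Hpb i)). reflexivity.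
Qed.

End ImageCoproducts.

Section Pushforward.
Variables (C1 C2 : Category) (F : Functor C1 C2).

Lemma pushOb_ext (H : PreData C1) (Y : C2) (s s' : pushOb F H Y) :
  (forall X psi, proj1_sig s X psi = proj1_sig s' X psi) -> s = s'.
Proof.
  destruct s as [s Hs], s' as [s' Hs']. simpl. intro E.
  assert (s = s') as <-.
  { apply functional_extensionality_dep. intro X. apply functional_extensionality. apply E. }
  f_equal. apply proof_irrelevance.
Qed.

Lemma pushOb_glue (H : PreData C1) (Y : C2) (Good : forall X, Hom (F X) Y -> H X -> Prop) :
  (forall X psi, exists x, Good X psi x) ->
  (forall X psi x x', Good X psi x -> Good X psi x' -> x = x') ->
  (forall X X' (h : Hom X' X) psi x,
      Good X psi x -> Good X' (comp psi (fmap F h)) (pmap H h x)) ->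
  exists s : pushOb F H Y, forall X psi, Good X psi (proj1_sig s X psi).
Proof.
  intros Hex Huniq Hrestr.
  destruct (dep_functional_choice (B := fun p : {X : C1 & Hom (F X) Y} => H (projT1 p))
              (R := fun p x => Good (projT1 p) (projT2 p) x)
              (fun p => Hex (projT1 p) (projT2 p))) as [s Hs].
  assert (Hcomp : @Compatible _ _ F H Y (fun X psi => s (existT _ X psi))).
  { intros X X' h psi.
    exact (Huniq _ _ _ _ (Hrestr _ _ h _ _ (Hs (existT _ X psi))) (Hs (existT _ X' _))). }
  exists (exist _ _ Hcomp). intros X psi. exact (Hs (existT _ X psi)).
Qed.

Lemma pushforward_presheaf (H : PreData C1) : IsPresheaf (pushforwardPre F H).
Proof.
  split.
  - intros X s. apply pushOb_ext. intros W psi. simpl. rewrite comp_id_l. reflexivity.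
  - intros X Y Z g f s. apply pushOb_ext. intros W psi. simpl. rewrite comp_assoc. reflexivity.
Qed.

End Pushforward.

Section PushforwardExtensive.
Variables (C1 C2 : Category) (F : Functor C1 C2) (T1 : Topology C1).
Hypothesis Hinv : InvertsCoproducts F.
Hypothesis HE : Extensive C2.
Variable H : PreData C1.
Hypothesis HH : IsSheaf T1 H.
Variables (I : Type) (Z : I -> C2) (S : C2) (iota : forall i, Hom (Z i) S).
Hypothesis Hc : IsCoproduct Z iota.

Lemma pushforward_summands_inj (s s' : pushOb F H S) :
  (forall i, pmap (pushforwardPre F H) (iota i) s = pmap (pushforwardPre F H) (iota i) s') ->
  s = s'.
Proof.
  intro Hss'. destruct HH as [_ [HexH _]]. apply pushOb_ext. intros W psi.
  destruct (image_coproduct_decomposition Hinv HE psi Hc) as (Wi & j & phi & HcW & _ & Hphi).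
  apply (proj1 (HexH I Wi W j HcW)). intro i.
  rewrite (proj2_sig s), (proj2_sig s'), (Hphi i).
  exact (f_equal (fun z : pushOb F H (Z i) => proj1_sig z (Wi i) (phi i)) (Hss' i)).
Qed.

Variable t : forall i, pushOb F H (Z i).

Lemma summand_sections_agree (V : C1) (i l : I) (a : Hom (F V) (Z i)) (b : Hom (F V) (Z l)) :
  comp (iota i) a = comp (iota l) b -> proj1_sig (t i) V a = proj1_sig (t l) V b.
Proof.
  intro Hab. destruct (excluded_middle_informative (i = l)) as [<-|Hil].
  - rewrite (extensive_injection_monic HE Hc Hab). reflexivity.
  - destruct HH as [Hpre [HexH _]].
    apply (extensive_presheaf_cosubterminal Hpre HexH).
    apply (fully_faithful_reflects_cosubterminal (proj1 Hinv)).
    exact (extensive_summands_disjoint HE Hc Hil Hab).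
Qed.

Definition GluesSummands (W : C1) (psi : Hom (F W) S) (x : H W) : Prop :=
  forall V (g : Hom V W) i (phi : Hom (F V) (Z i)),
    comp psi (fmap F g) = comp (iota i) phi -> pmap H g x = proj1_sig (t i) V phi.

Lemma glues_summands_exists (W : C1) (psi : Hom (F W) S) : exists x, GluesSummands psi x.
Proof.
  pose proof HH as [[_ Hcmp] [HexH _]]. pose proof (proj1 Hinv) as FF.
  destruct (image_coproduct_decomposition Hinv HE psi Hc) as (Wi & j & phi & HcW & HcFW & Hphi).
  destruct (proj2 (HexH I Wi W j HcW) (fun i => proj1_sig (t i) (Wi i) (phi i))) as [x Hx].
  exists x. intros V g i phi' Hg.
  destruct (image_coproduct_decomposition Hinv HE (fmap F g) HcFW)
    as (Vl & m & gF & HcV & _ & HgF).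
  destruct (dep_functional_choice (R := fun l gl => fmap F gl = gF l)
              (fun l => proj2 (FF _ _) _)) as [gl Hgl].
  apply (proj1 (HexH I Vl V m HcV)). intro l.
  assert (Hg_l : comp g (m l) = comp (j l) (gl l)).
  { apply (proj1 (FF _ _)). rewrite !fmap_comp, HgF, Hgl. reflexivity. }
  rewrite <- Hcmp, Hg_l, Hcmp, Hx, (proj2_sig (t l)), (proj2_sig (t i)).
  apply summand_sections_agree.
  rewrite !comp_assoc, <- Hphi, <- Hg, <- !comp_assoc, <- !fmap_comp, Hg_l. reflexivity.
Qed.

Lemma glues_summands_unique (W : C1) (psi : Hom (F W) S) (x x' : H W) :
  GluesSummands psi x -> GluesSummands psi x' -> x = x'.
Proof.
  intros Hx Hx'. destruct HH as [_ [HexH _]].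
  destruct (image_coproduct_decomposition Hinv HE psi Hc) as (Wi & j & phi & HcW & _ & Hphi).
  apply (proj1 (HexH I Wi W j HcW)). intro i.
  rewrite (Hx _ _ _ _ (Hphi i)), (Hx' _ _ _ _ (Hphi i)). reflexivity.
Qed.

Lemma pushforward_summands_glue :
  exists s : pushOb F H S, forall i, pmap (pushforwardPre F H) (iota i) s = t i.
Proof.
  destruct HH as [[Hid Hcmp] _].
  destruct (pushOb_glue glues_summands_exists glues_summands_unique) as [s Hs].
  { intros W W' h psi x Hx V g i phi Hg. rewrite <- Hcmp. apply Hx.
    rewrite fmap_comp, comp_assoc. exact Hg. }
  exists s. intro i. apply pushOb_ext. intros V phi. simpl.
  rewrite <- (Hid V (proj1_sig s V (comp (iota i) phi))).
  apply Hs. rewrite fmap_id, comp_id_r. reflexivity.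
Qed.

End PushforwardExtensive.

Lemma cocontinuous_lift {C1 C2 : Category} (F : Functor C1 C2) (T1 : Topology C1)
    (T2 : Topology C2) (Y X : C2) (pi : Hom Y X) (W : C1) (psi : Hom (F W) X) :
  IsGrothendieckTopology T2 -> Cocontinuous F T1 T2 -> UnivLocSplit T2 pi ->
  exists W' (p : Hom W' W) (psi' : Hom (F W') Y),
    UnivLocSplit T1 p /\ comp pi psi' = comp psi (fmap F p).
Proof.
  intros HT2 Hcoc Hpi. destruct (proj1 Hpi (F W) psi) as (P & a & b & Hpb).
  destruct (Hcoc _ _ _ (univ_loc_split_pullback HT2 Hpi Hpb)) as (W' & p & Hp & r & Hr).
  exists W', p, (comp b r). split; [exact Hp|].
  rewrite comp_assoc, <- (proj1 Hpb), <- comp_assoc, Hr. reflexivity.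
Qed.

Section PushforwardDescent.
Variables (C1 C2 : Category) (F : Functor C1 C2) (T1 : Topology C1) (T2 : Topology C2).
Hypothesis HT1 : IsGrothendieckTopology T1.
Hypothesis HT2 : IsGrothendieckTopology T2.
Hypothesis Hcoc : Cocontinuous F T1 T2.
Variable H : PreData C1.
Hypothesis HH : IsSheaf T1 H.
Variables (Y X : C2) (pi : Hom Y X).
Hypothesis Hpi : UnivLocSplit T2 pi.

Lemma pushforward_cover_inj (s s' : pushOb F H X) :
  pmap (pushforwardPre F H) pi s = pmap (pushforwardPre F H) pi s' -> s = s'.
Proof.
  intro Hss'. apply pushOb_ext. intros W psi.
  destruct (cocontinuous_lift psi HT2 Hcoc Hpi) as (W1 & p1 & psi1 & Hp1 & Hpsi1).
  apply (sheaf_restr_inj HH Hp1).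
  rewrite (proj2_sig s), (proj2_sig s'), <- Hpsi1.
  exact (f_equal (fun z : pushOb F H Y => proj1_sig z W1 psi1) Hss').
Qed.

Variables (K : C2) (k1 k2 : Hom K Y).
Hypothesis HK : IsPullback pi pi k1 k2.
Variable t : pushOb F H Y.
Hypothesis Ht : pmap (pushforwardPre F H) k1 t = pmap (pushforwardPre F H) k2 t.

Lemma cover_sections_agree (V : C1) (a b : Hom (F V) Y) :
  comp pi a = comp pi b -> proj1_sig t V a = proj1_sig t V b.
Proof.
  intro Hab. destruct (proj2 HK (F V) a b Hab) as [m [[<- <-] _]].
  exact (f_equal (fun z : pushOb F H K => proj1_sig z V m) Ht).
Qed.

Definition GluesCover (W : C1) (psi : Hom (F W) X) (x : H W) : Prop :=
  forall W' (p : Hom W' W) (psi' : Hom (F W') Y), UnivLocSplit T1 p ->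
    comp pi psi' = comp psi (fmap F p) -> pmap H p x = proj1_sig t W' psi'.

Lemma glues_cover_of_one (W W1 : C1) (psi : Hom (F W) X) (x : H W)
    (p1 : Hom W1 W) (psi1 : Hom (F W1) Y) :
  UnivLocSplit T1 p1 -> comp pi psi1 = comp psi (fmap F p1) ->
  pmap H p1 x = proj1_sig t W1 psi1 -> GluesCover psi x.
Proof.
  intros Hp1 Hpsi1 Hx1 W2 p2 psi2 _ Hpsi2.
  destruct HH as [[_ Hcmp] _].
  destruct (proj1 Hp1 W2 p2) as (W12 & q2 & q1 & Hpb).
  apply (sheaf_restr_inj HH (univ_loc_split_pullback HT1 Hp1 Hpb)).
  rewrite <- Hcmp, (proj1 Hpb), Hcmp, Hx1, (proj2_sig t), (proj2_sig t).
  apply cover_sections_agree.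
  rewrite !comp_assoc, Hpsi1, Hpsi2, <- !comp_assoc, <- !fmap_comp, (proj1 Hpb).
  reflexivity.
Qed.

Lemma glues_cover_exists (W : C1) (psi : Hom (F W) X) : exists x, GluesCover psi x.
Proof.
  pose proof HH as [[_ Hcmp] [_ HD]].
  destruct (cocontinuous_lift psi HT2 Hcoc Hpi) as (W1 & p1 & psi1 & Hp1 & Hpsi1).
  destruct (proj1 Hp1 W1 p1) as (K1 & l1 & l2 & HK1).
  destruct (proj2 (HD _ _ _ Hp1 _ _ _ HK1) (proj1_sig t W1 psi1)) as [x Hx].
  { rewrite (proj2_sig t), (proj2_sig t). apply cover_sections_agree.
    rewrite !comp_assoc, Hpsi1, <- !comp_assoc, <- !fmap_comp, (proj1 HK1). reflexivity. }
  exists x. exact (glues_cover_of_one Hp1 Hpsi1 Hx).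
Qed.

Lemma glues_cover_unique (W : C1) (psi : Hom (F W) X) (x x' : H W) :
  GluesCover psi x -> GluesCover psi x' -> x = x'.
Proof.
  intros Hx Hx'.
  destruct (cocontinuous_lift psi HT2 Hcoc Hpi) as (W1 & p1 & psi1 & Hp1 & Hpsi1).
  apply (sheaf_restr_inj HH Hp1).
  rewrite (Hx _ _ _ Hp1 Hpsi1), (Hx' _ _ _ Hp1 Hpsi1). reflexivity.
Qed.

Lemma glues_cover_restr (W W' : C1) (h : Hom W' W) (psi : Hom (F W) X) (x : H W) :
  GluesCover psi x -> GluesCover (comp psi (fmap F h)) (pmap H h x).
Proof.
  intro Hx. destruct HH as [[_ Hcmp] _].
  destruct (cocontinuous_lift psi HT2 Hcoc Hpi) as (W1 & p1 & psi1 & Hp1 & Hpsi1).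
  destruct (proj1 Hp1 W' h) as (W2 & q & q' & Hpb).
  apply (glues_cover_of_one (psi1 := comp psi1 (fmap F q'))
           (univ_loc_split_pullback HT1 Hp1 Hpb)).
  - rewrite comp_assoc, Hpsi1, <- !comp_assoc, <- !fmap_comp, (proj1 Hpb). reflexivity.
  - rewrite <- Hcmp, (proj1 Hpb), Hcmp, (Hx _ _ _ Hp1 Hpsi1), (proj2_sig t). reflexivity.
Qed.

Lemma pushforward_cover_glue :
  exists s : pushOb F H X, pmap (pushforwardPre F H) pi s = t.
Proof.
  destruct HH as [[Hid _] _].
  destruct (pushOb_glue glues_cover_exists glues_cover_unique glues_cover_restr) as [s Hs].
  exists s. apply pushOb_ext. intros V phi. simpl.
  rewrite <- (Hid V (proj1_sig s V (comp pi phi))).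
  apply Hs; [apply univ_loc_split_id; exact HT1|].
  rewrite fmap_id, comp_id_r. reflexivity.
Qed.

End PushforwardDescent.

Lemma pushforward_sheaf {C1 C2 : Category} (F : Functor C1 C2) (T1 : Topology C1)
    (T2 : Topology C2) (H : PreData C1) :
  IsGrothendieckTopology T1 -> IsGrothendieckTopology T2 -> Cocontinuous F T1 T2 ->
  InvertsCoproducts F -> Extensive C2 ->
  IsSheaf T1 H -> IsSheaf T2 (pushforwardPre F H).
Proof.
  intros HT1 HT2 Hcoc Hinv HE HH.
  split; [apply pushforward_presheaf|split].
  - intros I Z S iota Hc. split.
    + exact (pushforward_summands_inj Hinv HE HH Hc).
    + exact (pushforward_summands_glue Hinv HE HH Hc).
  - intros Y X pi Hpi K k1 k2 HK. split.
    + exact (pushforward_cover_inj HT2 Hcoc HH Hpi).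
    + intros t Ht. exact (pushforward_cover_glue HT1 HT2 Hcoc HH Hpi HK Ht).
Qed.

Lemma pullback_sheaf {C1 C2 : Category} (F : Functor C1 C2) (T1 : Topology C1)
    (T2 : Topology C2) (G : PreData C2) :
  Continuous F T1 T2 -> PreservesCoproducts F ->
  IsSheaf T2 G -> IsSheaf T1 (pullbackPre F G).
Proof.
  intros [Hcont_uls Hcont_pb] Hpres [[Hid Hcmp] [HexG HDG]].
  split; [split|split].
  - intros X s. simpl. rewrite fmap_id. apply Hid.
  - intros X Y Z g f s. simpl. rewrite fmap_comp. apply Hcmp.
  - intros I Z S iota Hc. exact (HexG _ _ _ _ (Hpres _ _ _ _ Hc)).
  - intros Y X pi Hpi K k1 k2 HK.
    exact (HDG _ _ _ (Hcont_uls _ _ _ Hpi) _ _ _ (Hcont_pb _ _ _ _ _ Hpi _ _ _ HK)).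
Qed.

Lemma counit_bijective {C1 C2 : Category} (F : Functor C1 C2) (T1 : Topology C1)
    (H : PreData C1) (X : C1) :
  FullyFaithful F -> IsSheaf T1 H -> CounitBijective F H X.
Proof.
  intros FF [[Hid Hcmp] _]. split.
  - intros s s' E. apply pushOb_ext. intros W psi.
    destruct (proj2 (FF W X) psi) as [g <-].
    rewrite <- (comp_id_l (fmap F g)), <- (proj2_sig s), <- (proj2_sig s').
    unfold counit in E. rewrite E. reflexivity.
  - intro t.
    destruct (pushOb_glue (Good := fun W psi x => forall g, fmap F g = psi -> x = pmap H g t))
      as [s Hs].
    + intros W psi. destruct (proj2 (FF W X) psi) as [g <-].
      exists (pmap H g t). intros g' Hg'. rewrite (proj1 (FF _ _) _ _ Hg'). reflexivity.
    + intros W psi x x' Hx Hx'. destruct (proj2 (FF W X) psi) as [g <-].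
      rewrite (Hx g), (Hx' g); reflexivity.
    + intros W W' h psi x Hx g' Hg'. destruct (proj2 (FF W X) psi) as [g <-].
      rewrite (Hx g eq_refl), <- Hcmp. f_equal.
      apply (proj1 (FF _ _)). rewrite Hg', fmap_comp. reflexivity.
    + exists s. unfold counit. rewrite (Hs X (cid _) (cid X) (fmap_id F X)). apply Hid.
Qed.

Section Unit.
Variables (C1 C2 : Category) (F : Functor C1 C2) (T2 : Topology C2).
Hypothesis HT2 : IsGrothendieckTopology T2.
Hypothesis Hdense : DenseImage F T2.
Hypothesis Hinv : InvertsCoproducts F.
Hypothesis HE : Extensive C2.
Variable G : PreData C2.
Hypothesis HG : IsSheaf T2 G.

Lemma pullback_pushOb_compat (Y : C2) (t : pushOb F (pullbackPre F G) Y)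
    (X X' : C1) (h : Hom X' X) (psi : Hom (F X) Y) :
  pmap G (fmap F h) (proj1_sig t X psi) = proj1_sig t X' (comp psi (fmap F h)).
Proof. exact (proj2_sig t X X' h psi). Qed.

Lemma dense_sheaf_separated (Z : C2) (x y : G Z) :
  (forall V (c : Hom (F V) Z), pmap G c x = pmap G c y) -> x = y.
Proof.
  intro Hxy. pose proof HG as [[_ Hcmp] [HexG _]].
  destruct (proj2 Hdense Z) as (I & U & phi & S & iota & HcS & h & Hh & Hh_uls).
  apply (sheaf_restr_inj HG Hh_uls). apply (proj1 (HexG I _ S iota HcS)). intro i.
  rewrite <- !Hcmp, Hh. apply Hxy.
Qed.

Lemma image_coproduct_section_restr {I : Type} (U : I -> C1) (S Y : C2)
    (iota : forall i, Hom (F (U i)) S) (h : Hom S Y)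
    (t : pushOb F (pullbackPre F G) Y) (u : G S) :
  IsCoproduct (fun i => F (U i)) iota ->
  (forall i, pmap G (iota i) u = proj1_sig t (U i) (comp h (iota i))) ->
  forall V (e : Hom (F V) S), pmap G e u = proj1_sig t V (comp h e).
Proof.
  intros HcS Hu V e. pose proof HG as [[_ Hcmp] [HexG _]].
  destruct (image_coproduct_decomposition Hinv HE e HcS) as (Vi & j & ph & _ & HcFV & Hph).
  apply (proj1 (HexG I _ _ _ HcFV)). intro i.
  rewrite <- Hcmp, (Hph i), Hcmp, Hu, pullback_pushOb_compat, <- comp_assoc, (Hph i),
    comp_assoc.
  destruct (proj2 (proj1 Hinv _ _) (ph i)) as [g <-].
  apply pullback_pushOb_compat.
Qed.

Lemma unit_bijective (Y : C2) : UnitBijective F G Y.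
Proof.
  intro t. pose proof HG as [[_ Hcmp] [HexG HDG]].
  destruct (proj2 Hdense Y) as (I & U & phi & S & iota & HcS & h & Hh & Hh_uls).
  destruct (proj2 (HexG I _ S iota HcS) (fun i => proj1_sig t (U i) (phi i))) as [u Hu].
  assert (Hu_restr : forall V (e : Hom (F V) S), pmap G e u = proj1_sig t V (comp h e)).
  { apply (image_coproduct_section_restr HcS). intro i. rewrite Hh. apply Hu. }
  destruct (proj1 Hh_uls S h) as (K & k1 & k2 & HK).
  destruct (proj2 (HDG _ _ _ Hh_uls _ _ _ HK) u) as [s Hs].
  { apply dense_sheaf_separated. intros V c.
    rewrite <- !Hcmp, !Hu_restr, !comp_assoc, (proj1 HK). reflexivity. }
  exists s. split.
  - intros X psi. destruct (proj1 Hh_uls (F X) psi) as (Q & a & b & Hpb).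
    apply (sheaf_restr_inj HG (univ_loc_split_pullback HT2 Hh_uls Hpb)).
    rewrite <- Hcmp, (proj1 Hpb), Hcmp, Hs.
    apply dense_sheaf_separated. intros V c. rewrite <- !Hcmp, Hu_restr.
    destruct (proj2 (proj1 Hdense _ _) (comp a c)) as [g Hg].
    rewrite <- Hg, pullback_pushOb_compat, Hg, !comp_assoc, (proj1 Hpb). reflexivity.
  - intros s' Hs'. apply (sheaf_restr_inj HG Hh_uls). rewrite Hs.
    apply (proj1 (HexG I _ S iota HcS)). intro i. rewrite Hu, <- Hcmp, Hh. apply Hs'.
Qed.

End Unit.

Theorem mainTheorem1 (C1 C2 : Category) (T1 : Topology C1) (T2 : Topology C2)
    (F : Functor C1 C2) :
  IsGrothendieckTopology T1 -> IsGrothendieckTopology T2 ->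
  Continuous F T1 T2 -> Cocontinuous F T1 T2 -> DenseImage F T2 ->
  PreservesCoproducts F -> InvertsCoproducts F ->
  Extensive C2 ->
  ShAdjointEquivalence F T1 T2.
Proof.
  intros HT1 HT2 Hcont Hcoc Hdense Hpres Hinv HE.
  split; [|split; [|split]].
  - intros G HG. exact (pullback_sheaf Hcont Hpres HG).
  - intros H HH. exact (pushforward_sheaf HT1 HT2 Hcoc Hinv HE HH).
  - intros G HG. exact (unit_bijective HT2 Hdense Hinv HE HG).
  - intros H HH X. exact (counit_bijective X (proj1 Hdense) HH).
Qed.
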